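(* Let $f$ be a multiplicative function from the positive integers to the nonnegative integers with $f(p^{k-1})\le f(p^k)$ for all primes $p$ and integers $k\ge1$. Every positive integer is $f$-practical if and only if $$f(p^k)\le S_f(p^{k-1})+1$$ holds for every prime $p$ and every integer $k\ge1$.
   Context: $f$ multiplicative means $f(1)=1$ and $f(ab)=f(a)f(b)$ for coprime $a,b$. $S_f(n)=\sum_{d\mid n} f(d)$. A positive integer $n$ is $f$-practical if every positive integer $m\le S_f(n)$ equals $\sum_{d\in\mathcal{D}}f(d)$ for some set $\mathcal{D}$ of distinct divisors of $n$. *)

From mathcomp Require Import all_boot.
Set Implicit Arguments. Unset Strict Implicit. Unset Printing Implicit Defensive.

(* f : positive integers -> nonnegative integers, modelled as nat -> nat;
   the value f 0 is irrelevant (never used). *)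
Definition multiplicative (f : nat -> nat) : Prop :=
  f 1 = 1 /\ forall a b, 0 < a -> 0 < b -> coprime a b -> f (a * b) = f a * f b.

Definition S_f (f : nat -> nat) (n : nat) : nat := \sum_(d <- divisors n) f d.

Definition f_practical (f : nat -> nat) (n : nat) : Prop :=
  forall m, 0 < m -> m <= S_f f n ->
    exists D : seq nat, [/\ uniq D, {subset D <= divisors n} &
                           m = \sum_(d <- D) f d].

From mathcomp Require Import all_boot zify.

(* The values f(d), d | n, form a multiset; call it complete when its sub-sums
   fill the whole interval [0, S_f(n)].  Writing n = p^k b with p coprime to b,
   multiplicativity splits this multiset into the blocks f(p^i) * {f(e) : e | b},
   i = 0..k.  Adjoining y times a complete multiset to a complete multiset of
   sum S keeps it complete as soon as y <= S + 1; after the blocks 0..i-1 the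
   sum is S_f(p^(i-1)) S_f(b) >= S_f(p^(i-1)), so the hypothesis licenses every
   step, and induction on n concludes.  Conversely, every element x of a
   complete multiset is at most one more than the sum of the others, which for
   n = p^k and x = f(p^k) is the stated inequality. *)

Set Implicit Arguments.
Unset Strict Implicit.
Unset Printing Implicit Defensive.

Definition subsum (L : seq nat) (m : nat) : Prop := exists bs, sumn (mask bs L) = m.

Definition complete (L : seq nat) : Prop := forall m, m <= sumn L -> subsum L m.

Lemma subsum0 L : subsum L 0.
Proof. by exists [::]. Qed.

Lemma subsum_perm L L' m : perm_eq L L' -> subsum L m -> subsum L' m.
Proof.
move=> eqLL' [bs <-].
have /count_maskP[bs' _ /perm_sumn->] :
    forall x, count_mem x (mask bs L) <= count_mem x L'.
  by move=> x; rewrite -(permP eqLL') leq_count_mask.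
by exists bs'.
Qed.

Lemma subsum_cat L M a b : subsum L a -> subsum M b -> subsum (L ++ M) (a + b).
Proof.
move=> [bs <-] [cs <-]; have [bs' size_bs' ->] := resize_mask bs L.
by exists (bs' ++ cs); rewrite mask_cat // sumn_cat.
Qed.

Lemma sumn_map_muln y L : sumn (map (muln y) L) = y * sumn L.
Proof. by rewrite !sumnE big_map big_distrr. Qed.

Lemma subsum_map_muln y L m : subsum L m -> subsum (map (muln y) L) (y * m).
Proof. by move=> [bs <-]; exists bs; rewrite -map_mask sumn_map_muln. Qed.

Lemma leq_sumn_mask bs L : sumn (mask bs L) <= sumn L.
Proof.
elim: L bs => [|x L IHL] [|[] bs] //=; first by rewrite leq_add2l.
exact: leq_trans (IHL bs) (leq_addl _ _).
Qed.

Lemma sumn_rem x L : x \in L -> sumn L = x + sumn (rem x L).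
Proof. by move/perm_to_rem/perm_sumn. Qed.

Lemma complete_perm L L' : perm_eq L L' -> complete L -> complete L'.
Proof. by move=> eqLL' cL m; rewrite -(perm_sumn eqLL') => /cL; apply: subsum_perm. Qed.

(* m = r + y * q with r <= sumn L and q <= sumn M: the intervals
   [y * q, sumn L + y * q] cover [0, sumn L + y * sumn M] since y <= sumn L + 1. *)
Lemma complete_cat_map_muln L M y :
  complete L -> complete M -> y <= sumn L + 1 -> complete (L ++ map (muln y) M).
Proof.
move=> cL cM le_y m; rewrite sumn_cat sumn_map_muln; move: m.
suff subsum_le q : q <= sumn M ->
    forall m, m <= sumn L + y * q -> subsum (L ++ map (muln y) M) m by exact: subsum_le.
elim: q => [|q IHq] le_qM m le_m.
  by rewrite -[m]addn0; apply: subsum_cat; [apply: cL; lia | apply: subsum0].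
have [|lt_m] := leqP m (sumn L + y * q); first by apply: IHq; lia.
rewrite -(subnK (_ : y * q.+1 <= m)); last by rewrite mulnS; lia.
apply: subsum_cat; last exact/subsum_map_muln/cM.
by apply: cL; rewrite mulnS in le_m *; lia.
Qed.

Lemma sumn_allpairs_muln w L : sumn [seq x * y | x <- w, y <- L] = sumn w * sumn L.
Proof. by elim: w => //= x w IHw; rewrite sumn_cat sumn_map_muln IHw mulnDl. Qed.

Lemma complete_allpairs_muln w L : complete L -> 0 < sumn L ->
    (forall i, i < size w -> nth 0 w i <= sumn (take i w) + 1) ->
  complete [seq x * y | x <- w, y <- L].
Proof.
move=> cL sumL_gt0; elim/last_ind: w => [_ m|w x IHw w_ok].
  by rewrite allpairs0l leqn0 => /eqP->; apply: subsum0.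
rewrite allpairs_rcons; apply: complete_cat_map_muln => //.
  apply: IHw => i lt_iw; have le_iw := ltnW lt_iw.
  move: (w_ok i); rewrite size_rcons ltnS le_iw nth_rcons lt_iw.
  by rewrite -cats1 takel_cat //; apply.
have := w_ok (size w); rewrite size_rcons nth_rcons ltnn eqxx -cats1 take_size_cat //.
rewrite sumn_allpairs_muln => /(_ (ltnSn _)) /leq_trans; apply.
by rewrite leq_add2r leq_pmulr.
Qed.

Lemma complete_le_sumn_rem L x : complete L -> x \in L -> x <= sumn (rem x L) + 1.
Proof.
(* Otherwise sumn (rem x L) + 1 is too small for a sub-sum using x and too large
   for one avoiding it. *)
move=> cL xL; rewrite leqNgt; apply/negP => lt_x.
have /cL/(subsum_perm (perm_to_rem xL)) [[|[] bs] /=] : sumn (rem x L) + 1 <= sumn L.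
- by rewrite (sumn_rem xL); lia.
- lia.
- lia.
- by have := leq_sumn_mask bs (rem x L); lia.
Qed.

Lemma divisors_mul_coprime a b : 0 < a -> 0 < b -> coprime a b ->
  perm_eq (divisors (a * b)) [seq x * y | x <- divisors a, y <- divisors b].
Proof.
move=> a_gt0 b_gt0 co_ab; have co_ba : coprime b a by rewrite coprime_sym.
have gcd_divisors x y : x %| a -> y %| b -> gcdn a (x * y) = x /\ gcdn b (x * y) = y.
  move=> xa yb; rewrite Gauss_gcdl ?(coprime_dvdr yb co_ab) //.
  by rewrite Gauss_gcdr ?(coprime_dvdr xa co_ba) //; split; apply/gcdn_idPr.
apply: uniq_perm; rewrite ?divisors_uniq //.
  rewrite allpairs_uniq ?divisors_uniq // => u v.
  move=> /allpairsP[[x y] [/= xa yb ->]] /allpairsP[[x' y'] [/= x'a y'b ->]] /= eq_xy.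
  move: xa yb x'a y'b; rewrite -!dvdn_divisors // => xa yb x'a y'b.
  have [gcd_ax gcd_by] := gcd_divisors x y xa yb.
  have [gcd_ax' gcd_by'] := gcd_divisors x' y' x'a y'b.
  by congr (_, _); [rewrite -gcd_ax -gcd_ax' | rewrite -gcd_by -gcd_by']; rewrite eq_xy.
move=> d; rewrite -dvdn_divisors ?muln_gt0 ?a_gt0 //.
apply/idP/allpairsP => [d_ab | [[x y] [/=]]]; last first.
  by rewrite -!dvdn_divisors // => xa yb ->; apply: dvdn_mul.
exists (gcdn a d, gcdn b d); rewrite /= -!dvdn_divisors ?dvdn_gcdl //; split=> //.
apply/eqP; rewrite eqn_dvd Gauss_dvd ?dvdn_gcdr ?andbT; last first.
  exact: coprime_dvdl (dvdn_gcdl _ _) (coprime_dvdr (dvdn_gcdl _ _) co_ab).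
by rewrite muln_gcdl !muln_gcdr !dvdn_gcd d_ab dvdn_mull ?dvdn_mulr.
Qed.

Lemma divisors_pfactor p k : prime p ->
  perm_eq (divisors (p ^ k)) [seq p ^ i | i <- iota 0 k.+1].
Proof.
move=> p_pr; apply: uniq_perm; rewrite ?divisors_uniq //.
  by rewrite (map_inj_uniq (expnI (prime_gt1 p_pr))) iota_uniq.
move=> d; rewrite -dvdn_divisors ?expn_gt0 ?prime_gt0 //.
apply/(dvdn_pfactor _ _ p_pr)/mapP => -[i]; last by rewrite mem_iota => ? ->; exists i.
by exists i; rewrite ?mem_iota.
Qed.

Lemma map_divisors_mul_coprime f a b :
    multiplicative f -> 0 < a -> 0 < b -> coprime a b ->
  perm_eq (map f (divisors (a * b)))
          [seq x * y | x <- map f (divisors a), y <- map f (divisors b)].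
Proof.
move=> [_ f_mul] a_gt0 b_gt0 co_ab.
rewrite allpairs_mapl allpairs_mapr.
have -> : [seq f x * f y | x <- divisors a, y <- divisors b] =
          map f [seq x * y | x <- divisors a, y <- divisors b].
  rewrite map_allpairs; apply/eq_in_allpairs => x y.
  rewrite -!dvdn_divisors // => xa yb.
  rewrite f_mul ?(dvdn_gt0 a_gt0 xa) ?(dvdn_gt0 b_gt0 yb) //.
  exact: coprime_dvdl xa (coprime_dvdr yb co_ab).
by rewrite perm_map // divisors_mul_coprime.
Qed.

Lemma S_fE f n : S_f f n = sumn (map f (divisors n)).
Proof. by rewrite sumnE big_map. Qed.

Lemma S_f_pfactor f p k : prime p ->
  S_f f (p ^ k) = sumn [seq f (p ^ i) | i <- iota 0 k.+1].
Proof.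
by move=> p_pr; rewrite S_fE (perm_sumn (perm_map f (divisors_pfactor k p_pr))) -map_comp.
Qed.

Lemma S_f_pfactorS f p k : prime p -> S_f f (p ^ k.+1) = S_f f (p ^ k) + f (p ^ k.+1).
Proof. by move=> p_pr; rewrite !S_f_pfactor // -addn1 iotaD map_cat sumn_cat /= addn0. Qed.

Lemma f_practicalP f n : f_practical f n <-> complete (map f (divisors n)).
Proof.
rewrite /f_practical S_fE; split=> [f_pr m | cpl m _ /cpl[bs <-]]; last first.
  exists (mask bs (divisors n)); split; rewrite ?mask_uniq ?divisors_uniq //.
    by move=> d /mem_mask.
  by rewrite -map_mask sumnE big_map.
have [-> _ | m_gt0 /(f_pr m m_gt0)[D [uniq_D sub_D ->]]] := posnP m; first exact: subsum0.
exists (map [in D] (divisors n)); rewrite -map_mask -filter_mask sumnE big_map.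
apply: perm_big; apply: uniq_perm; rewrite ?filter_uniq ?divisors_uniq // => d.
by rewrite mem_filter; apply: andb_idr => /sub_D.
Qed.

Lemma pfactor_le_S_f_of_complete f p k : prime p ->
  complete (map f (divisors (p ^ k.+1))) -> f (p ^ k.+1) <= S_f f (p ^ k) + 1.
Proof.
move=> p_pr cpl; have f_pk : f (p ^ k.+1) \in map f (divisors (p ^ k.+1)).
  by rewrite map_f // divisors_id // expn_gt0 prime_gt0.
have := complete_le_sumn_rem cpl f_pk; have := sumn_rem f_pk.
by rewrite -S_fE S_f_pfactorS //; lia.
Qed.

Section Sufficiency.

Variable f : nat -> nat.
Hypothesis f_mul : multiplicative f.
Hypothesis f_pfactor_le :
  forall p k, prime p -> 0 < k -> f (p ^ k) <= S_f f (p ^ k.-1) + 1.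

Lemma complete_divisors_pfactor_mul p k b : prime p -> coprime p b -> 0 < b ->
  complete (map f (divisors b)) -> complete (map f (divisors (p ^ k * b))).
Proof.
move=> p_pr co_pb b_gt0 cpl_b.
have pk_gt0 : 0 < p ^ k by rewrite expn_gt0 prime_gt0.
have /complete_perm : perm_eq
    [seq x * y | x <- [seq f (p ^ i) | i <- iota 0 k.+1], y <- map f (divisors b)]
    (map f (divisors (p ^ k * b))).
  rewrite perm_sym.
  rewrite (permPl (map_divisors_mul_coprime f_mul pk_gt0 b_gt0 (coprimeXl k co_pb))).
  by apply: perm_allpairs => //; rewrite (map_comp f (expn p)) perm_map ?divisors_pfactor.
apply; apply: complete_allpairs_muln => //.
  by rewrite (sumn_rem (map_f f (divisor1 b))) f_mul.1.
move=> i; rewrite size_map size_iota ltnS => le_ik.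
rewrite (nth_map 0) ?size_iota // nth_iota // -map_take take_iota (minn_idPl (leqW le_ik)).
case: i le_ik => [|i] _; first by rewrite f_mul.1.
by rewrite -S_f_pfactor //; apply: f_pfactor_le.
Qed.

Lemma complete_divisors n : 0 < n -> complete (map f (divisors n)).
Proof.
elim/ltn_ind: n => n IHn n_gt0; have [le_n1 | n_gt1] := leqP n 1.
  have -> : n = 1 by lia.
  by move=> m; rewrite /= f_mul.1 => le_m1; exists [:: m == 1]; case: m le_m1 => [|[]].
have p_pr := pdiv_prime n_gt1; set p := pdiv n in p_pr *.
have [b co_pb n_eq] := pfactor_coprime p_pr n_gt0.
have b_gt0 : 0 < b by move: n_gt0; rewrite n_eq muln_gt0 => /andP[].
have pk_gt1 : 1 < p ^ logn p n.
  by rewrite -(expn0 p) ltn_exp2l ?prime_gt1 // logn_gt0 mem_primes p_pr n_gt0 pdiv_dvd.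
rewrite n_eq mulnC; apply: complete_divisors_pfactor_mul (IHn b _ b_gt0) => //.
by rewrite n_eq ltn_Pmulr.
Qed.

End Sufficiency.

Theorem theorem2p7 (f : nat -> nat) :
  multiplicative f ->
  (forall p k, prime p -> 0 < k -> f (p ^ k.-1) <= f (p ^ k)) ->
  ((forall n, 0 < n -> f_practical f n) <->
   (forall p k, prime p -> 0 < k -> f (p ^ k) <= S_f f (p ^ k.-1) + 1)).
Proof.
move=> f_mul _; split=> [practical p [|k] p_pr // _ | f_pfactor_le n n_gt0].
  apply/pfactor_le_S_f_of_complete/f_practicalP/practical => //.
  by rewrite expn_gt0 prime_gt0.
exact/f_practicalP/complete_divisors.
Qed.
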